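(* Let $G$ be a graph. If $G$ admits a radial subtree model $(T,\mathcal{S})$, then $G$ is a leaf power.
   Context: A subtree model of a graph $G$ is a pair $(T,\mathcal{S})$ where $T$ is a tree and $\mathcal{S}=\{S_v \mid v\in V(G)\}$ is a family of connected subtrees of $T$ such that for any two distinct vertices $u,v$, $S_u\cap S_v\neq\emptyset$ if and only if $uv\in E(G)$. A radial subtree model (RS model) is a subtree model in which for each $v\in V(G)$ there is a node $c_v\in V(T)$ (center) and an integer $r_v\ge 0$ (radius) such that $S_v$ is the subtree of $T$ induced by exactly the nodes at distance at most $r_v$ from $c_v$. For a positive integer $k$, $G$ is a $k$-leaf power if there is a tree $T'$ and a bijection $\tau$ from $V(G)$ to the set of leaves of $T'$ such that distinct $u,v$ are adjacent in $G$ iff $\tau(u),\tau(v)$ are at distance at most $k$ in $T'$. $G$ is a leaf power if it is a $k$-leaf power for some positive integer $k$. *)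

From mathcomp Require Import all_boot.
Set Implicit Arguments. Unset Strict Implicit. Unset Printing Implicit Defensive.

Definition simple_graph (V : finType) (adj : rel V) : Prop :=
  symmetric adj /\ irreflexive adj.

Definition within (N : finType) (t : rel N) (x y : N) (k : nat) : Prop :=
  exists p : seq N, [/\ path t x p, last x p = y & size p <= k].

Definition has_cycle (N : finType) (t : rel N) : Prop :=
  exists (x : N) (p : seq N),
    [/\ path t x p, uniq (x :: p), 2 <= size p & t (last x p) x].

Definition is_tree (N : finType) (t : rel N) : Prop :=
  [/\ simple_graph t, (forall x y : N, connect t x y) & ~ has_cycle t].

Definition connected_subtree (N : finType) (t : rel N) (S : {set N}) : Prop :=
  S != set0 /\
  forall x y, x \in S -> y \in S ->
    exists p : seq N, [/\ path t x p, last x p = y & all (fun z => z \in S) p].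

Definition subtree_model (V : finType) (adj : rel V)
    (N : finType) (t : rel N) (S : V -> {set N}) : Prop :=
  [/\ is_tree t,
      (forall v, connected_subtree t (S v)) &
      (forall u v, u != v -> ((S u :&: S v != set0) <-> adj u v))].

Definition radial_subtree_model (V : finType) (adj : rel V)
    (N : finType) (t : rel N) (S : V -> {set N}) : Prop :=
  subtree_model adj t S /\
  exists (c : V -> N) (r : V -> nat),
    forall v x, x \in S v <-> within t (c v) x (r v).

(* Leaves of a tree: nodes of degree at most one (so a one-node tree has one leaf). *)
Definition is_leaf (N : finType) (t : rel N) (x : N) : Prop :=
  #|[set y | t x y]| <= 1.

Definition k_leaf_power (V : finType) (adj : rel V) (k : nat) : Prop :=
  exists (N : finType) (t : rel N) (tau : V -> N),
    [/\ is_tree t,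
        injective tau,
        (forall v, is_leaf t (tau v)),
        (forall x, is_leaf t x -> exists v, tau v = x) &
        (forall u v, u != v -> (adj u v <-> within t (tau u) (tau v) k))].

Definition leaf_power (V : finType) (adj : rel V) : Prop :=
  exists k, 0 < k /\ k_leaf_power adj k.

From mathcomp Require Import all_boot zify.
Set Implicit Arguments. Unset Strict Implicit. Unset Printing Implicit Defensive.

(* In a radial subtree model S_u and S_v meet iff d(c_u, c_v) <= r_u + r_v.
   With R the largest radius, hang from every centre c_v a new path of length
   R - r_v + 1 ending in a leaf tau(v); then
   d(tau u, tau v) = d(c_u, c_v) + 2R + 2 - r_u - r_v, so u and v are adjacent
   iff their leaves are at distance at most 2R + 2.  Repeatedly deleting the
   leaves not of the form tau(v) changes no distance between the tau(v) and
   leaves a tree whose leaves are exactly the tau(v).  Both the hanging and the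
   deleting step are instances of one situation: a tree with a pendant leaf
   versus the tree without it. *)

Section Walks.
Variables (N : finType) (t : rel N).

Lemma within_refl x : within t x x 0.
Proof. by exists [::]. Qed.

Lemma within1 x y : t x y -> within t x y 1.
Proof. by move=> txy; exists [:: y]; rewrite /= txy. Qed.

Lemma within_leq x y k k' : k <= k' -> within t x y k -> within t x y k'.
Proof.
by move=> le_kk' [p [tp lastp size_p]]; exists p; split=> //; apply: leq_trans le_kk'.
Qed.

Lemma within_trans x y z a b :
  within t x y a -> within t y z b -> within t x z (a + b).
Proof.
move=> [p [tp lastp size_p]] [q [tq lastq size_q]]; exists (p ++ q); split.
- by rewrite cat_path tp lastp tq.
- by rewrite last_cat lastp.
- by rewrite size_cat leq_add.
Qed.

Lemma within_split x y a b :
  within t x y (a + b) -> exists2 z, within t x z a & within t z y b.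
Proof.
move=> [p [tp lastp size_p]].
have /andP[tp1 tp2] : path t x (take a p) && path t (last x (take a p)) (drop a p).
  by rewrite -cat_path cat_take_drop.
exists (last x (take a p)); first by exists (take a p); rewrite size_take_min geq_minl.
exists (drop a p); split=> //; first by rewrite -last_cat cat_take_drop.
by rewrite size_drop leq_subLR.
Qed.

Lemma within_sym x y k : symmetric t -> within t x y k -> within t y x k.
Proof.
move=> ts [p [tp <- size_p]]; apply: within_leq size_p _.
elim: p x tp => [|z p IHp] x /=; first by move=> _; exact: within_refl.
case/andP=> txz /IHp wzp; rewrite -addn1; apply: within_trans wzp (within1 _).
by rewrite ts.
Qed.

Lemma connect_within x y : connect t x y <-> exists k, within t x y k.
Proof.
split=> [/connectP[p tp lastp] | [k [p [tp lastp _]]]]; first by exists (size p), p.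
by apply/connectP; exists p.
Qed.

End Walks.

Record pendant_leaf (N M : finType) (t : rel N) (T : rel M)
    (f : N -> M) (g : M -> N) (x : M) (c : N) : Prop := PendantLeaf {
  pendant_fK : cancel f g;
  pendant_gK : forall z, z != x -> f (g z) = z;
  pendant_fx : forall a, f a != x;
  pendant_Tf : forall a b, T (f a) (f b) = t a b;
  pendant_Tx : forall z, T x z = (z == f c);
  pendant_xT : forall z, T z x = (z == f c) }.

Section PendantLeaf.
Variables (N M : finType) (t : rel N) (T : rel M) (f : N -> M) (g : M -> N).
Variables (x : M) (c : N).
Hypothesis hP : pendant_leaf t T f g x c.

Let fK := pendant_fK hP.
Let gK := pendant_gK hP.
Let fx := pendant_fx hP.
Let Tf := pendant_Tf hP.
Let Tx := pendant_Tx hP.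
Let xT := pendant_xT hP.

Lemma path_embed a p : path T (f a) (map f p) = path t a p.
Proof. by rewrite path_map (eq_path Tf). Qed.

Lemma map_gK p : x \notin p -> map f (map g p) = p.
Proof.
move=> xp; rewrite -map_comp map_id_in // => z zp /=.
by apply: gK; apply: contraNneq xp => <-.
Qed.

(* A walk can only enter and leave [x] through [f c], so every visit to [x]
   is a detour that can be cut out. *)
Lemma path_avoid_pendant n z p : size p <= n -> z != x -> path T z p ->
  last z p != x ->
  exists2 q, path T z q & [/\ last z q = last z p, size q <= size p & x \notin q].
Proof.
elim: n z p => [|n IHn] z [|w p] //= size_p zx; try by exists [::].
case/andP=> Tzw Twp lastp; have [wx | wx] := eqVneq w x; last first.
  have [q Twq [lastq size_q xq]] := IHn w p size_p wx Twp lastp.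
  exists (w :: q); first by rewrite /= Tzw.
  by rewrite /= lastq inE negb_or eq_sym wx.
move: Tzw lastp Twp; rewrite {w}wx xT => /eqP zc.
case: p size_p => [|w p] /= size_p; first by rewrite eqxx.
rewrite Tx -zc => lastp /andP[/eqP wz Tzp]; subst w.
have [|q Tzq [lastq size_q xq]] := IHn z p _ zx Tzp lastp; first exact: ltnW.
by exists q => //; split=> //; rewrite (leq_trans size_q) // ltnW.
Qed.

Lemma within_embed a b k : within T (f a) (f b) k <-> within t a b k.
Proof.
split=> [[p [Tp lastp size_p]] | [p [tp lastp size_p]]]; last first.
  by exists (map f p); rewrite path_embed last_map lastp size_map.
have [|q Tq [lastq size_q xq]] := path_avoid_pendant (leqnn _) (fx a) Tp.
  by rewrite lastp fx.
exists (map g q); split.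
- by rewrite -path_embed map_gK.
- by rewrite -{1}(fK a) last_map lastq lastp fK.
- by rewrite size_map (leq_trans size_q).
Qed.

Lemma within_pendant b k : within T x (f b) k <-> 0 < k /\ within t c b k.-1.
Proof.
split=> [[[|w p] [Tp lastp size_p]] | [k_gt0 /(within_embed c b)[p [Tp lastp size_p]]]].
- by move: (fx b); rewrite -lastp eqxx.
- move: Tp lastp size_p => /= /andP[]; rewrite Tx => /eqP -> Tp lastp size_p.
  split; first by lia.
  by apply/(within_embed c b); exists p; split=> //; lia.
- by exists (f c :: p); rewrite /= Tx eqxx; split=> //; lia.
Qed.

Lemma cycle_avoid_pendant z p :
  cycle T (z :: p) -> uniq (z :: p) -> 2 <= size p -> x \notin z :: p.
Proof.
move=> cycp uniqp size_p; apply/negP => /rot_to[i q rotp].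
have : 2 < size (x :: q) by rewrite -rotp size_rot.
move: cycp uniqp; rewrite -(rot_cycle i) -(rot_uniq i) {}rotp.
case: q => [|w1 [|w2 q]] //= /and3P[Txw1 _]; rewrite rcons_path => /andP[_ Tlastx].
move: Txw1 Tlastx; rewrite Tx xT => /eqP-> /eqP lastq /and3P[_ cq _] _.
by rewrite -lastq mem_last in cq.
Qed.

Lemma has_cycle_pendant : has_cycle T <-> has_cycle t.
Proof.
have cycleE a s :
    [/\ path T (f a) (map f s), uniq (f a :: map f s), 2 <= size (map f s)
      & T (last (f a) (map f s)) (f a)] <->
    [/\ path t a s, uniq (a :: s), 2 <= size s & t (last a s) a].
  by rewrite path_embed -map_cons (map_inj_uniq (can_inj fK)) size_map last_map Tf.
split=> [[z [p [Tp uniqp size_p Tlast]]] | [a [s /cycleE cycs]]]; last first.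
  by exists (f a), (map f s).
have cycp : cycle T (z :: p) by rewrite /= rcons_path Tp Tlast.
have /= [ez ep] := map_gK (cycle_avoid_pendant cycp uniqp size_p).
by exists (g z), (map g p); apply/cycleE; rewrite ez ep.
Qed.

Lemma simple_graph_pendant : simple_graph T <-> simple_graph t.
Proof.
split=> [[symT irrT] | [symt irrt]].
  by split=> [a b | a]; rewrite -!Tf; [rewrite symT | rewrite irrT].
split=> [z w | z].
- have [-> | zx] := eqVneq z x; first by rewrite Tx xT.
  have [-> | wx] := eqVneq w x; first by rewrite Tx xT.
  by rewrite -(gK zx) -(gK wx) !Tf symt.
- have [-> | zx] := eqVneq z x; first by rewrite Tx eq_sym (negbTE (fx c)).
  by rewrite -(gK zx) Tf irrt.
Qed.

Lemma connect_embed a b : connect T (f a) (f b) = connect t a b.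
Proof.
apply/idP/idP => /connect_within[k w]; apply/connect_within; exists k.
  exact/within_embed.
exact/within_embed.
Qed.

Lemma is_tree_pendant : is_tree T <-> is_tree t.
Proof.
split=> [[/simple_graph_pendant simpt connT /has_cycle_pendant acyc] |
         [simpt connt acyc]].
  by split=> // a b; rewrite -connect_embed.
have [symT _] := (iffRL simple_graph_pendant) simpt.
split=> //; [exact/simple_graph_pendant | | by move/has_cycle_pendant].
have connx a : connect T x (f a).
  have Txc : T x (f c) by rewrite Tx.
  by apply: connect_trans (connect1 Txc) _; rewrite connect_embed.
move=> z w; have [-> | zx] := eqVneq z x; have [-> | wx] := eqVneq w x.
- exact: connect0.
- by rewrite -(gK wx).
- by rewrite (sym_connect_sym symT) -(gK zx).
- by rewrite -(gK zx) -(gK wx) connect_embed.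
Qed.

Lemma is_leaf_pendant : is_leaf T x.
Proof.
rewrite /is_leaf; have -> : [set z | T x z] = [set f c].
  by apply/setP => z; rewrite !inE Tx.
by rewrite cards1.
Qed.

Lemma is_leaf_of_embed a : is_leaf T (f a) -> is_leaf t a.
Proof.
apply: leq_trans; rewrite -(card_imset _ (can_inj fK)); apply: subset_leq_card.
by apply/subsetP => z /imsetP[b]; rewrite !inE => tab ->; rewrite Tf.
Qed.

Lemma is_leaf_embed a : a != c -> is_leaf t a -> is_leaf T (f a).
Proof.
move=> ac; apply: leq_trans; rewrite -(card_imset _ (can_inj fK)).
apply/subset_leq_card/subsetP => z; rewrite inE => Tz.
have zx : z != x by apply: contraTneq Tz => ->; rewrite xT (inj_eq (can_inj fK)).
by apply/imsetP; exists (g z); rewrite ?gK // inE -Tf gK.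
Qed.

End PendantLeaf.

Definition add_leaf (N : finType) (t : rel N) (c : N) : rel (option N) :=
  fun p q => match p, q with
  | Some a, Some b => t a b
  | None, Some b => b == c
  | Some a, None => a == c
  | None, None => false
  end.

Lemma add_leaf_pendant (N : finType) (t : rel N) (c : N) :
  pendant_leaf t (add_leaf t c) Some (odflt c) None c.
Proof. by split=> // - []. Qed.

Lemma remove_leaf_pendant (M : finType) (T : rel M) (x : M) (y : {z : M | z != x}) :
  symmetric T -> (forall z, T x z = (z == val y)) ->
  pendant_leaf (relpre val T) T val (insubd y) x y.
Proof.
move=> symT Tx; split=> //.
- exact: valKd.
- by move=> z zx; rewrite insubdK.
- exact: valP.
- by move=> z; rewrite symT.
Qed.

Lemma leaf_neighbour (M : finType) (T : rel M) (x z : M) :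
  (forall a b, connect T a b) -> is_leaf T x -> z != x ->
  exists y, forall w, T x w = (w == y).
Proof.
rewrite /is_leaf leq_eqVlt ltnS leqn0 cards_eq0.
move=> connT /orP[/cards1P[y ey] | /eqP nbx] zx.
  by exists y => w; move/setP: ey => /(_ w); rewrite !inE.
have /connectP[[|w p] /= xp ez] := connT x z; first by rewrite ez eqxx in zx.
have : w \in [set w | T x w] by rewrite inE; case/andP: xp.
by rewrite nbx inE.
Qed.

Lemma prune_leaves (V M : finType) (T : rel M) (tau : V -> M) (v0 : V) :
  is_tree T -> (forall v, is_leaf T (tau v)) ->
  exists (M' : finType) (T' : rel M') (tau' : V -> M'),
  [/\ is_tree T', (forall v, is_leaf T' (tau' v)),
      (forall z, is_leaf T' z -> exists v, tau' v = z) &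
      (forall u v k, within T' (tau' u) (tau' v) k <-> within T (tau u) (tau v) k)].
Proof.
have [n] := ubnP #|M|; elim: n => // n IHn in M T tau *.
rewrite ltnS => Mn treeT leaf_tau.
case: (pickP [pred z | (#|[set w | T z w]| <= 1) && [forall v, tau v != z]]) => /=
  [x /andP[leafx /forallP taux] | no_extra]; last first.
  exists M, T, tau; split=> // z leafz.
  by move: (no_extra z); rewrite /= leafz => /forallPn[v /negPn/eqP]; exists v.
have [[symT irrT] connT _] := treeT.
have [y Txy] := leaf_neighbour connT leafx (taux v0).
have yx : y != x by apply/eqP => yx; move: (irrT x); rewrite Txy yx eqxx.
pose y' : {z | z != x} := Sub y yx.
have P := @remove_leaf_pendant _ _ _ y' symT Txy.
pose tau1 v := insubd y' (tau v).
have tau1K v : val (tau1 v) = tau v by rewrite insubdK // unfold_in taux.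
have card_lt : #|{: {z | z != x}}| < n.
  have M_gt0 : 0 < #|M| by apply/card_gt0P; exists x.
  by rewrite card_sig (eq_card (B := predC1 x)) // cardC1; lia.
have leaf_tau1 v : is_leaf (relpre val T) (tau1 v).
  by apply: (is_leaf_of_embed P); rewrite tau1K.
have [M' [T' [tau' [treeT' leaf_tau' tau'_onto within_tau']]]] :=
  IHn _ _ tau1 card_lt ((is_tree_pendant P).1 treeT) leaf_tau1.
exists M', T', tau'; split=> // u v k.
by rewrite -!tau1K; apply: iff_trans (within_tau' u v k) (iff_sym (within_embed P _ _ _)).
Qed.

Lemma add_pendant_path n (M : finType) (T : rel M) (y : M) : is_tree T ->
  exists (M' : finType) (T' : rel M') (g : M -> M') (x : M'),
  [/\ is_tree T', (forall a b k, within T' (g a) (g b) k <-> within T a b k),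
      (forall b k, within T' x (g b) k <-> n < k /\ within T y b (k - n.+1)),
      is_leaf T' x & (forall a, a != y -> is_leaf T a -> is_leaf T' (g a))].
Proof.
move=> treeT; elim: n => [|n [M' [T' [g [x [treeT' within_g within_x leafx leaf_g]]]]]].
  have P := add_leaf_pendant T y.
  exists (option M), (add_leaf T y), Some, None; split.
  - exact/(is_tree_pendant P).
  - exact: within_embed P.
  - move=> b k; rewrite subn1; exact: (within_pendant P b k).
  - exact: is_leaf_pendant P.
  - exact: is_leaf_embed P.
have P := add_leaf_pendant T' x.
exists (option M'), (add_leaf T' x), (fun a => Some (g a)), None; split.
- exact/(is_tree_pendant P).
- by move=> a b k; apply: iff_trans (within_embed P _ _ _) (within_g a b k).
- move=> b k; apply: iff_trans (within_pendant P _ _) _.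
  have -> : k - n.+2 = k.-1 - n.+1 by lia.
  split=> [[k_gt0 /within_x[lt_nk w]] | [lt_nk w]]; split=> //; try lia.
  by apply/within_x; split=> //; lia.
- exact: is_leaf_pendant P.
- move=> a ay leafa; apply: (is_leaf_embed P); last exact: leaf_g.
  apply/eqP => gax; have /within_x[] // : within T' x (g a) 0.
  by rewrite gax; apply: within_refl.
Qed.

(* [T] is [t] (embedded by [f]) with, for each [v] in [s], a new path of
   length [l v + 1] from [c v] to a leaf [tau v]; only the resulting distances
   are recorded. *)
Definition pendant_paths (V N M : finType) (t : rel N) (c : V -> N) (l : V -> nat)
    (s : seq V) (T : rel M) (f : N -> M) (tau : V -> M) : Prop :=
  [/\ is_tree T, (forall a b k, within T (f a) (f b) k <-> within t a b k),
      (forall v, v \in s -> is_leaf T (tau v)),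
      (forall v b k, v \in s ->
         (within T (tau v) (f b) k <-> l v < k /\ within t (c v) b (k - (l v).+1))) &
      (forall u v k, u \in s -> v \in s -> u != v ->
         (within T (tau u) (tau v) k <->
            (l u + l v).+1 < k /\ within t (c u) (c v) (k - (l u + l v).+2)))].

Lemma pendant_paths_cons (V N M : finType) (t : rel N) (c : V -> N) (l : V -> nat)
    (v : V) (s : seq V) (T : rel M) (f : N -> M) (tau : V -> M) :
  symmetric t -> pendant_paths t c l s T f tau ->
  exists (M' : finType) (T' : rel M') (f' : N -> M') (tau' : V -> M'),
    pendant_paths t c l (v :: s) T' f' tau'.
Proof.
move=> symt [treeT within_f leaf_tau within_tau_f within_tau].
have [[symT _] _ _] := treeT.
have [M' [T' [g [x [treeT' within_g within_x leafx leaf_g]]]]] :=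
  add_pendant_path (l v) (f (c v)) treeT.
have [[symT' _] _ _] := treeT'.
have tau_f u b : u \in s -> tau u != f b.
  move=> us; apply/eqP => e.
  have /(within_tau_f _ _ _ us)[] // : within T (tau u) (f b) 0.
  by rewrite e; apply: within_refl.
have within_x_tau w k : w \in s -> w != v ->
    (within T' x (g (tau w)) k <->
       (l v + l w).+1 < k /\ within t (c v) (c w) (k - (l v + l w).+2)).
  move=> ws wv; have -> : k - (l v + l w).+2 = k - (l v).+1 - (l w).+1 by lia.
  split=> [/within_x[lt_k /(within_sym symT)/(within_tau_f _ _ _ ws)[lt_k' d]] |
           [lt_k d]].
    by split; [lia | apply: within_sym symt d].
  apply/within_x; split; first lia.
  apply: within_sym symT _; apply/(within_tau_f _ _ _ ws).
  by split; [lia | apply: within_sym symt d].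
exists M', T', (fun a => g (f a)), (fun u => if u == v then x else g (tau u)); split=> //.
- by move=> a b k; apply: iff_trans (within_g _ _ _) (within_f a b k).
- move=> u; rewrite inE; have [_ | uv /= us] := eqVneq u v; first by [].
  by apply: leaf_g; [apply: tau_f | apply: leaf_tau].
- move=> u b k; rewrite inE; have [-> _ | uv /= us] := eqVneq u v.
    apply: iff_trans (within_x _ _) _.
    by split=> -[lt_k w]; split=> //; apply/within_f.
  exact: iff_trans (within_g _ _ _) (within_tau_f _ _ _ us).
- move=> u w k; rewrite !inE.
  have [-> _ | uv /= us] := eqVneq u v; have [-> _ | wv /= ws] := eqVneq w v.
  + by [].
  + by move=> _; apply: within_x_tau.
  + move=> _; apply: iff_trans (conj (within_sym symT') (within_sym symT')) _.
    apply: iff_trans (within_x_tau _ _ us uv) _; rewrite addnC.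
    by split=> -[lt_k w']; split=> //; apply: within_sym symt w'.
  + by move=> uw; apply: iff_trans (within_g _ _ _) (within_tau _ _ _ us ws uw).
Qed.

Lemma hang_pendant_paths (V N : finType) (t : rel N) (c : V -> N) (l : V -> nat)
    (s : seq V) :
  is_tree t ->
  exists (M : finType) (T : rel M) (f : N -> M) (tau : V -> M),
    pendant_paths t c l s T f tau.
Proof.
move=> treet; have [[symt _] _ _] := treet.
elim: s => [|v s [M [T [f [tau paths]]]]]; first by exists N, t, id, c; split.
exact: pendant_paths_cons symt paths.
Qed.

Lemma radial_model_centers (V N : finType) (adj : rel V) (t : rel N)
    (S : V -> {set N}) :
  radial_subtree_model adj t S ->
  exists (c : V -> N) (r : V -> nat),
    forall u v, u != v -> (adj u v <-> within t (c u) (c v) (r u + r v)).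
Proof.
move=> [[[[symt _] _ _] _ meet_adj] [c [r ballS]]]; exists c, r => u v uv.
apply: iff_trans (iff_sym (meet_adj u v uv)) _; split.
  case/set0Pn => z; rewrite inE => /andP[/ballS du /ballS dv].
  exact: within_trans du (within_sym symt dv).
case/within_split => z du dv; apply/set0Pn; exists z.
by rewrite inE; apply/andP; split; apply/ballS => //; apply: within_sym symt dv.
Qed.

Lemma k_leaf_power_card0 (V : finType) (adj : rel V) k :
  #|V| = 0 -> k_leaf_power adj k.
Proof.
move=> /card0_eq V0; have emptyV (v : V) : False by have := V0 v.
exists void, (fun _ _ => false), (fun v => match emptyV v with end).
by split=> [| u | v | [] | u] //; split; [split | case | case=> [[]]].
Qed.

Lemma k_leaf_power_centers (V N : finType) (adj : rel V) (t : rel N)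
    (c : V -> N) (r : V -> nat) :
  is_tree t ->
  (forall u v, u != v -> (adj u v <-> within t (c u) (c v) (r u + r v))) ->
  k_leaf_power adj (\max_v r v).*2.+2.
Proof.
move=> treet adjE; have [V0 | /card_gt0P[v0 _]] := posnP #|V|.
  exact: k_leaf_power_card0.
pose l v := \max_v r v - r v.
have r_le v : r v <= \max_v r v by apply: leq_bigmax.
have inV v : v \in enum V by rewrite mem_enum.
have [M [T [f [tau [treeT _ leaf_tau _ within_tau]]]]] :=
  hang_pendant_paths c l (enum V) treet.
have [M' [T' [tau' [treeT' leaf_tau' tau'_onto within_tau']]]] :=
  prune_leaves v0 treeT (fun v => leaf_tau v (inV v)).
exists M', T', tau'; split=> //.
- move=> u v eq_tau; have [// | uv] := eqVneq u v.
  have : within T' (tau' u) (tau' v) 0 by rewrite eq_tau; apply: within_refl.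
  by move/within_tau'/(within_tau _ _ _ (inV u) (inV v) uv) => [].
- move=> u v uv; have ru := r_le u; have rv := r_le v.
  apply: iff_trans (adjE u v uv) _; apply: iff_sym.
  apply: iff_trans (within_tau' u v _) _.
  apply: iff_trans (within_tau u v _ (inV u) (inV v) uv) _.
  have -> : (\max_v r v).*2.+2 - (l u + l v).+2 = r u + r v by rewrite /l; lia.
  by split=> [[] // | d]; split=> //; rewrite /l; lia.
Qed.

Theorem lemma2 (V : finType) (adj : rel V) :
  simple_graph adj ->
  (exists (N : finType) (t : rel N) (S : V -> {set N}),
      radial_subtree_model adj t S) ->
  leaf_power adj.
Proof.
move=> _ [N [t [S model]]]; have [[treet _ _] _] := model.
have [c [r adjE]] := radial_model_centers model.
by exists (\max_v r v).*2.+2; split; last exact: k_leaf_power_centers treet adjE.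
Qed.
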